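(* Let $n\ge2$, let $x_1=0$ and let $x_2,\dots,x_n$ be arbitrary real numbers. Then for every $\alpha>0$, $$\frac{\sum_{i=1}^n x_ie^{-\alpha x_i}}{\sum_{j=1}^n e^{-\alpha x_j}}\le\frac{\ln n}{\alpha}.$$ *)

From Stdlib Require Export Reals.

From Stdlib Require Import Reals Lra Lia.
Open Scope R_scope.

(* Gibbs' inequality for the weights w_i = exp (-alpha x_i) with total mass S
   gives S ln (S/n) <= sum w_i ln w_i = -alpha sum x_i w_i; since w_1 = 1 we
   have S >= 1, so ln S >= 0 and alpha sum x_i w_i <= S ln n. *)

Lemma ln_le_sub1 (a : R) : 0 < a -> ln a <= a - 1.
Proof.
  intros Ha. pose proof (exp_ineq1_le (ln a)) as H. rewrite exp_ln in H; lra.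
Qed.

Lemma ln_nonneg (a : R) : 1 <= a -> 0 <= ln a.
Proof.
  intros Ha. pose proof (ln_le_sub1 (/ a)) as H. rewrite ln_Rinv in H by lra.
  assert (/ a <= 1) by (rewrite <- Rinv_1; apply Rinv_le_contravar; lra).
  assert (0 < / a) by (apply Rinv_0_lt_compat; lra).
  lra.
Qed.

Lemma ln_div (a b : R) : 0 < a -> 0 < b -> ln (a / b) = ln a - ln b.
Proof.
  intros Ha Hb. unfold Rdiv.
  rewrite ln_mult, ln_Rinv by (try apply Rinv_0_lt_compat; lra). ring.
Qed.

Lemma mul_ln_ratio_le (a b : R) : 0 < a -> 0 < b -> a * ln (b / a) <= b - a.
Proof.
  intros Ha Hb.
  assert (Hba : 0 < b / a) by (apply Rdiv_lt_0_compat; lra).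
  pose proof (ln_le_sub1 _ Hba) as H.
  apply Rmult_le_compat_l with (r := a) in H; [|lra].
  replace (a * (b / a - 1)) with (b - a) in H by (field; lra).
  exact H.
Qed.

Lemma sum_f_R0_ge_first (f : nat -> R) (N : nat) :
  (forall i, 0 < f i) -> f 0%nat <= sum_f_R0 f N.
Proof.
  intros Hf; induction N as [|N IH]; simpl; [lra|].
  specialize (Hf (S N)); lra.
Qed.

Lemma sum_f_R0_pos (f : nat -> R) (N : nat) :
  (forall i, 0 < f i) -> 0 < sum_f_R0 f N.
Proof.
  intros Hf. pose proof (sum_f_R0_ge_first f N Hf). specialize (Hf 0%nat). lra.
Qed.

Lemma sum_mul_ln_ge (w : nat -> R) (N : nat) :
  (forall i, 0 < w i) ->
  sum_f_R0 w N * (ln (sum_f_R0 w N) - ln (INR (S N)))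
    <= sum_f_R0 (fun i => w i * ln (w i)) N.
Proof.
  intros Hw.
  set (s := sum_f_R0 w N).
  set (m := INR (S N)).
  assert (Hs : 0 < s) by (apply sum_f_R0_pos; exact Hw).
  assert (Hm : 0 < m) by (apply lt_0_INR; lia).
  assert (Hpt : forall i,
    w i * (ln s - ln m) - w i * ln (w i) <= s / m - w i).
  { intros i. specialize (Hw i).
    rewrite <- Rmult_minus_distr_l, <- !ln_div by
      (try apply Rdiv_lt_0_compat; lra).
    apply mul_ln_ratio_le; [lra | apply Rdiv_lt_0_compat; lra]. }
  pose proof (sum_Rle _ _ N (fun i _ => Hpt i)) as H.
  rewrite !minus_sum, sum_cte, <- (scal_sum w N (ln s - ln m)) in H.
  fold s m in H.
  replace (s / m * m) with s in H by (field; lra).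
  lra.
Qed.

(* Indices shifted: x 0, ..., x (n-1) stand for x_1, ..., x_n;
   sum_f_R0 f (n-1) = f 0 + ... + f (n-1). *)
Theorem lemma4 (n : nat) (x : nat -> R) (alpha : R) :
  (2 <= n)%nat -> x 0%nat = 0 -> 0 < alpha ->
  sum_f_R0 (fun i => x i * exp (- alpha * x i)) (n - 1)
    / sum_f_R0 (fun j => exp (- alpha * x j)) (n - 1)
  <= ln (INR n) / alpha.
Proof.
  intros Hn Hx0 Ha.
  set (w := fun j => exp (- alpha * x j)).
  assert (Hw : forall i, 0 < w i) by (intros; apply exp_pos).
  set (s := sum_f_R0 w (n - 1)).
  set (t := sum_f_R0 (fun i => x i * w i) (n - 1)).
  change (t / s <= ln (INR n) / alpha).
  assert (Hs1 : 1 <= s).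
  { pose proof (sum_f_R0_ge_first w (n - 1) Hw) as H.
    unfold w at 1 in H. rewrite Hx0, Rmult_0_r, exp_0 in H. exact H. }
  assert (Hlns : 0 <= ln s) by (apply ln_nonneg; exact Hs1).
  assert (Hgibbs : s * (ln s - ln (INR n)) <= - alpha * t).
  { pose proof (sum_mul_ln_ge w (n - 1) Hw) as H.
    replace (S (n - 1)) with n in H by lia.
    fold s in H. unfold t. rewrite scal_sum.
    erewrite sum_eq; [exact H|]. intros i _. unfold w. rewrite ln_exp. ring. }
  apply Rmult_le_reg_r with (r := alpha * s); [nra|].
  replace (t / s * (alpha * s)) with (alpha * t) by (field; lra).
  replace (ln (INR n) / alpha * (alpha * s)) with (s * ln (INR n)) by (field; lra).
  assert (0 <= s * ln s) by (apply Rmult_le_pos; lra).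
  lra.
Qed.
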